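(* Let $T$ be a lifted graph, $F\colon T\to T$ a continuous sun-like map of degree 1, ${\cal P}$ a basic partition of $F$ and ${\cal G}$ its covering graph. If $\alpha\to\beta$ is an arrow in ${\cal G}$ and $A\in{\cal P}$ satisfies $\langle\alpha\rangle\subset A$, then $\langle\alpha\rangle$ positively $F$-covers $\langle\beta\rangle+p(A)$.
   Context: A lifted graph is a connected topological space $T$ with a homeomorphism $h\colon\mathbb R\to h(\mathbb R)\subset T$ and a homeomorphism $\tau\colon T\to T$ such that $\tau(h(x))=h(x+1)$, the closure of each connected component of $T\setminus h(\mathbb R)$ is a topological finite graph meeting $h(\mathbb R)$ in exactly one point, and only finitely many such components have closure meeting $h([0,1])$. Identify $h(\mathbb R)$ with $\mathbb R$, write $x+m:=\tau^m(x)$; $r_{\mathbb R}\colon T\to\mathbb R$ is the identity on $\mathbb R$ and maps a component $C$ of $T\setminus\mathbb R$ to the point $\overline C\cap\mathbb R$. $F$ has degree 1 if $F(x+1)=F(x)+1$. Let $T_{\mathbb R}:=\overline{\bigcup_{n\ge0}F^n(\mathbb R)}$, $X:=\overline{T\setminus T_{\mathbb R}}\cap r_{\mathbb R}^{-1}([0,1))$. $F$ is sun-like if $(T\setminus T_{\mathbb R})\cap r_{\mathbb R}^{-1}([0,1))$ consists of finitely many intervals with pairwise disjoint closures $X^i$, $i\in\Lambda$ (branches), each a compact interval meeting $T_{\mathbb R}$ in one endpoint $\min X^i$ (fixing the order of $X^i$). For $j\in\Lambda$, $r_j\colon T\to X^j$ is $r_j(x)=x$ for $x\in X^j$ and $r_j(x)=\min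 X^j$ otherwise. Positive covering: for nonempty compact intervals $I\subset X^i$, $J\subset X^j$, $n\ge1$ and $p\in\mathbb Z$, $I$ positively $F^n$-covers $J+p$ if there exist $x\le y$ in $I$ (order of $X^i$) with $r_j(F^n(x)-p)\le\min J$ and $\max J\le r_j(F^n(y)-p)$ (order of $X^j$). A basic partition is a finite family ${\cal P}=\{X^i_j\}$ of pairwise disjoint nonempty compact intervals $X^i_1<\dots<X^i_{N_i}$ in $X^i$, with $\ell(X^i_j)\in\Lambda$, $p(X^i_j)\in\mathbb Z$, such that $F(X^i_j)\subset(X^{\ell(X^i_j)}+p(X^i_j))\cup\mathrm{Int}(T_{\mathbb R})$, $F(\min X^i_j)=\min X^{\ell(X^i_j)}+p(X^i_j)$, and $F(X\setminus\bigcup X^i_j)\cap(X+\mathbb Z)=\emptyset$. For $A_0,\dots,A_n\in{\cal P}$, $\langle A_0\dots A_n\rangle:=F^n(\{x\in T: F^i(x)\in A_i+\mathbb Z,\ 0\le i\le n\})\cap X$. $A_0\dots A_n\sim B_0\dots B_m$ iff for some $k\le\min(n,m)$, $A_{n-i}=B_{m-i}$ ($0\le i\le k$) and $\langle A_0\dots A_{n-k}\rangle=A_{n-k}=B_{m-k}=\langle B_0\dots B_{m-k}\rangle$; then $\langle\cdot\rangle$ is well defined on classes. The covering graph ${\cal G}$: vertices are classes $A_0\dots A_n/\!\sim$ with $\langle A_0\dots A_n\rangle\ne\emptyset$; arrow $\alpha\to\beta$ iff $\alpha=A_0\dots A_n/\!\sim$, $\beta=A_0\dots A_nA_{n+1}/\!\sim$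 for some $A_i\in{\cal P}$. *)

From HB Require Import structures.
From mathcomp Require Import all_boot all_order all_algebra.
From mathcomp Require Import all_classical all_reals all_analysis.
Set Implicit Arguments. Unset Strict Implicit. Unset Printing Implicit Defensive.
Import Order.TTheory GRing.Theory Num.Theory.
Import numFieldNormedType.Exports.
Local Open Scope classical_set_scope.
Local Open Scope ring_scope.

Section LiftedGraphs.
Variables (R : realType) (T : topologicalType).

Definition I01 : set R := [set t | 0 <= t <= 1].
Definition Ioc01 : set R := [set t | 0 < t <= 1].

Definition embedding (h : R -> T) :=
  [/\ continuous h, injective h &
      forall U : set R, open U -> exists V : set T, open V /\ h @` U = V `&` range h].

Definition arc01 (g : R -> T) :=
  [/\ {within I01, continuous g}, {in I01 &, injective g} &
      forall U : set R, open U ->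
        exists V : set T, open V /\ g @` (U `&` I01) = V `&` g @` I01].

Definition finite_top_graph (G : set T) :=
  [/\ compact G, connected G,
      (forall x y, G x -> G y -> x <> y ->
         exists U V : set T, [/\ open U, open V, U x, V y & U `&` V `&` G = set0]) &
      exists (m : nat) (e : 'I_m -> R -> T),
        [/\ forall k, arc01 (e k),
            G = [set x | exists k, (e k @` I01) x] &
            forall k l, k != l -> forall x, (e k @` I01) x -> (e l @` I01) x ->
              (x = e k 0 \/ x = e k 1) /\ (x = e l 0 \/ x = e l 1)]].

Definition compo (h : R -> T) (x : T) := connected_component (~` range h) x.

Definition lifted_graph (h : R -> T) (tau tauinv : T -> T) :=
  [/\ connected [set: T] /\ embedding h,
      [/\ continuous tau, continuous tauinv, cancel tau tauinv & cancel tauinv tau],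
      (forall x, tau (h x) = h (x + 1)),
      (forall x, ~ range h x ->
         finite_top_graph (closure (compo h x)) /\
         exists y, closure (compo h x) `&` range h = [set y]) &
      finite_set [set C : set T | (exists x, ~ range h x /\ C = compo h x) /\
                                  closure C `&` (h @` I01) !=set0]].

(* r_R^{-1}([0,1)) *)
Definition rRpre01 (h : R -> T) : set T :=
  [set x | exists t, 0 <= t < 1 /\
     (x = h t \/ (~ range h x /\ closure (compo h x) (h t)))].

Definition shift (tau tauinv : T -> T) (m : int) (x : T) : T :=
  match m with Posz n => iter n tau x | Negz n => iter n.+1 tauinv x end.

Definition TR (F : T -> T) (h : R -> T) : set T :=
  closure [set y | exists n t, y = iter n F (h t)].

Definition Xset (F : T -> T) (h : R -> T) : set T :=
  closure (~` TR F h) `&` rRpre01 h.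

Definition XplusZ (tau tauinv : T -> T) (F : T -> T) (h : R -> T) : set T :=
  [set y | exists m x, Xset F h x /\ y = shift tau tauinv m x].

(* sun-like: branches X^i = phi i ([0,1]), i in the finite type L, ordered by
   the parameter, min X^i = phi i 0. *)
Definition sun_like (F : T -> T) (h : R -> T) (L : finType) (phi : L -> R -> T) :=
  [/\ (forall i, arc01 (phi i)) /\ (forall i, TR F h (phi i 0)),
      forall i t, Ioc01 t -> ~ TR F h (phi i t),
      forall i, closure (phi i @` Ioc01) = phi i @` I01,
      forall i j, i != j -> phi i @` I01 `&` phi j @` I01 = set0 &
      (~` TR F h) `&` rRpre01 h = [set x | exists i, (phi i @` Ioc01) x]].

(* parameter of r_j(x) in X^j = phi j ([0,1]) *)
Definition rpar (L : finType) (phi : L -> R -> T) (j : L) (x : T) : R :=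
  xget 0 [set t | I01 t /\ phi j t = x].

(* I = phi i ([a,b]) positively F^n-covers J + p, with J = phi j ([c,d]) *)
Definition pos_covers (tau tauinv : T -> T) (F : T -> T) (L : finType)
  (phi : L -> R -> T) (n : nat) (i : L) (a b : R) (j : L) (c d : R) (p : int) :=
  exists s u, [/\ a <= s, s <= u, u <= b,
    rpar phi j (shift tau tauinv (- p) (iter n F (phi i s))) <= c &
    d <= rpar phi j (shift tau tauinv (- p) (iter n F (phi i u)))].

(* the element k of the basic partition: X^{pb k}_. = phi (pb k) ([pa k, pc k]) *)
Definition Pset (L K : finType) (phi : L -> R -> T) (pb : K -> L) (pa pc : K -> R)
  (k : K) : set T := phi (pb k) @` [set t | pa k <= t <= pc k].

Definition basic_partition (tau tauinv : T -> T) (F : T -> T) (h : R -> T)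
  (L K : finType) (phi : L -> R -> T) (pb : K -> L) (pa pc : K -> R)
  (pl : K -> L) (pp : K -> int) :=
  [/\ forall k, 0 <= pa k /\ pa k <= pc k /\ pc k <= 1,
      forall k k', k != k' -> Pset phi pb pa pc k `&` Pset phi pb pa pc k' = set0,
      forall k, F @` Pset phi pb pa pc k `<=`
                (shift tau tauinv (pp k) @` (phi (pl k) @` I01)) `|` interior (TR F h),
      forall k, F (phi (pb k) (pa k)) = shift tau tauinv (pp k) (phi (pl k) 0) &
      F @` (Xset F h `\` [set x | exists k, Pset phi pb pa pc k x])
        `&` XplusZ tau tauinv F h = set0].

Definition angle (tau tauinv : T -> T) (F : T -> T) (h : R -> T)
  (L K : finType) (phi : L -> R -> T) (pb : K -> L) (pa pc : K -> R)
  (s : nat -> K) (n : nat) : set T :=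
  (iter n F @` [set x | forall i, (i <= n)%N ->
      exists m y, Pset phi pb pa pc (s i) y /\ iter i F x = shift tau tauinv m y])
  `&` Xset F h.

End LiftedGraphs.

From Pilot Require Import Defs.
From HB Require Import structures.
From mathcomp Require Import all_boot all_order all_algebra.
From mathcomp Require Import all_classical all_reals all_analysis.
From mathcomp Require Import zify lra finmap.
Import Order.TTheory GRing.Theory Num.Theory.
Import numFieldNormedType.Exports.
Set Implicit Arguments. Unset Strict Implicit. Unset Printing Implicit Defensive.
Local Open Scope classical_set_scope.
Local Open Scope ring_scope.

(* By induction on n, every nonempty <A_0 ... A_n> is an initial subarc
   phi_i([pa A_n, b]) of its partition interval A_n.  Its image under F starts at
   min X^l + p and stays in (X^l + p) \cup Int(T_R), and only the parameter 0 of
   X^l + p can touch the closure of Int(T_R).  Connectedness therefore forces the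
   parameters of X^l + p reached by F to form an interval [0, sg], and compactness
   shows that sg itself is reached.  So <A_0 ... A_n A_{n+1}> is the initial subarc
   phi_l([pa A_{n+1}, min sg (pc A_{n+1})]), and the endpoint pa A_n together with
   a preimage of phi_l(sg) + p witness the positive covering. *)

Lemma int_ind_addr1 (P : int -> Prop) :
  P 0 -> (forall m, P m -> P (m + 1)) -> (forall m, P m -> P (m - 1)) ->
  forall m, P m.
Proof.
move=> P0 PS PN; elim/int_rect => // n Pn.
- by rewrite intS addrC; exact: PS.
- by rewrite intS opprD addrC; exact: PN.
Qed.

Lemma intr_eq0_bounded (R : numDomainType) (m : int) :
  -1 < m%:~R :> R -> m%:~R < 1 :> R -> m = 0.
Proof.
have -> : -1 = (-1)%:~R :> R by rewrite rmorphN /= rmorph1.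
have -> : 1 = 1%:~R :> R by rewrite rmorph1.
by rewrite !ltr_int => ? ?; lia.
Qed.

Section Shift.
Variables (T : topologicalType) (tau tauinv : T -> T).
Hypotheses (tauK : cancel tau tauinv) (tauinvK : cancel tauinv tau).
Local Notation sh := (@Defs.shift T tau tauinv).

Lemma shiftS m x : sh (m + 1) x = tau (sh m x).
Proof.
case: m => [n|[|n]].
- by have -> : Posz n + 1 = Posz n.+1 by rewrite -addn1 PoszD.
- by rewrite /= tauinvK.
- have -> : Negz n.+1 + 1 = Negz n by rewrite !NegzE; lia.
  by rewrite /= tauinvK.
Qed.

Lemma shiftN1 m x : sh (m - 1) x = tauinv (sh m x).
Proof. by rewrite -[in RHS](subrK 1 m) shiftS tauK. Qed.

Lemma shiftD m k x : sh m (sh k x) = sh (m + k) x.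
Proof.
elim/int_ind_addr1: m => [|m IH|m IH]; first by rewrite add0r.
- by rewrite shiftS IH -shiftS addrAC.
- by rewrite shiftN1 IH -shiftN1 addrAC.
Qed.

Lemma shiftK m : cancel (sh m) (sh (- m)).
Proof. by move=> x; rewrite shiftD addNr. Qed.

Variable F : T -> T.
Hypothesis Ftau : forall x, F (tau x) = tau (F x).

Lemma shift_comm m x : F (sh m x) = sh m (F x).
Proof.
have Ftauinv y : F (tauinv y) = tauinv (F y).
  by apply: (can_inj tauK); rewrite -Ftau !tauinvK.
elim/int_ind_addr1: m x => [|m IH|m IH] x //.
- by rewrite !shiftS Ftau IH.
- by rewrite !shiftN1 Ftauinv IH.
Qed.

Lemma iter_shift k m x : iter k F (sh m x) = sh m (iter k F x).
Proof. by elim: k => //= k ->; rewrite shift_comm. Qed.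

Variables (R : realType) (h : R -> T).
Hypothesis tauh : forall x, tau (h x) = h (x + 1).

Lemma tauinv_h x : tauinv (h x) = h (x - 1).
Proof. by rewrite -{1}(subrK 1 x) -tauh tauK. Qed.

Lemma shift_h m x : sh m (h x) = h (x + m%:~R).
Proof.
elim/int_ind_addr1: m x => [|m IH|m IH] x; first by rewrite addr0.
- by rewrite shiftS IH tauh rmorphD /= addrA.
- by rewrite shiftN1 IH tauinv_h rmorphB /= addrA.
Qed.

Hypotheses (ctau : continuous tau) (ctauinv : continuous tauinv).

Lemma continuous_shift m : continuous (sh m).
Proof.
elim/int_ind_addr1: m => [x|m IH|m IH]; first exact: cvg_id.
- have -> : sh (m + 1) = tau \o sh m by apply: funext => x; rewrite shiftS.
  by move=> x; apply: continuous_comp; [exact: IH|exact: ctau].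
- have -> : sh (m - 1) = tauinv \o sh m by apply: funext => x; rewrite shiftN1.
  by move=> x; apply: continuous_comp; [exact: IH|exact: ctauinv].
Qed.

End Shift.

Section TopologyFacts.
Variables (T U : topologicalType).

Lemma closure_image_continuous (f : T -> U) (A : set T) x :
  continuous f -> closure A x -> closure (f @` A) (f x).
Proof.
move=> cf clA B /cf /clA [y [Ay By]].
by exists (f y); split => //; exists y.
Qed.

Lemma closure_setC_Ninterior (A : set T) x : closure (~` A) x -> ~ A° x.
Proof. by rewrite -{2}(setCK A) interiorC => clx /(_ clx). Qed.

Lemma connected_component_image (f : T -> U) (A : set T) (B : set U) x :
  continuous f -> A x -> f @` A `<=` B ->
  f @` connected_component A x `<=` connected_component B (f x).
Proof.
move=> cf Ax fAB; apply: connected_component_max.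
- by exists x => //; exact: connected_component_refl.
- by move=> _ [y /connected_component_sub Ay <-]; apply: fAB; exists y.
- apply: connected_continuous_connected; first exact: component_connected.
  exact: continuous_subspaceT.
Qed.

Lemma connected_open_cover (C A B : set T) : connected C -> open A -> open B ->
  C `<=` A `|` B -> C `&` A `&` B = set0 -> C `<=` A \/ C `<=` B.
Proof.
move=> Cc oA oB CAB CAB0; have CAB_empty y : C y -> A y -> B y -> False.
  by move=> Cy Ay By; have : (C `&` A `&` B) y by []; rewrite CAB0.
have sep : separated (C `&` A) (C `&` B).
  split; apply/seteqP; split => // z.
  - move=> [clz [Cz Bz]].
    have [y [[Cy Ay] By]] := clz _ (open_nbhs_nbhs (conj oB Bz)).
    exact: CAB_empty Cy Ay By.
  - move=> [[Cz Az] clz].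
    have [y [[Cy By] Ay]] := clz _ (open_nbhs_nbhs (conj oA Az)).
    exact: CAB_empty Cy Ay By.
have CAB' : C `<=` (C `&` A) `|` (C `&` B).
  by move=> z Cz; case: (CAB z Cz) => ?; [left|right].
by case: (connected_subset sep CAB' Cc) => sub; [left|right] => z /sub [].
Qed.

Lemma continuous_within_nbhs (f : T -> U) (A : set T) t N :
  {within A, continuous f} -> A t -> nbhs (f t) N ->
  nbhs t [set t' | A t' -> N (f t')].
Proof. by move=> fc At /(fc t); case: (nbhs_subspaceP A t). Qed.

Variable R : realType.

Lemma arc01_trace (g : R -> T) (W : set R) : arc01 g -> open W ->
  exists2 V : set T, open V & forall w, I01 w -> V (g w) <-> W w.
Proof.
case=> _ ginj gopen /gopen [V [oV eV]]; exists V => // w Iw; split => [Vw|Ww].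
- have : (V `&` g @` @I01 R) (g w) by split => //; exists w.
  rewrite -eV => -[u [Wu Iu] /ginj eu].
  by rewrite -eu //; exact: mem_set.
- by have [] : (V `&` g @` @I01 R) (g w) by rewrite -eV; exists w.
Qed.

End TopologyFacts.

Lemma closure_stable (T : topologicalType) (f : T -> T) (A : set T) x :
  continuous f -> f @` A `<=` A -> closure A x -> closure A (f x).
Proof. by move=> cf fA /(closure_image_continuous cf); apply: closureS. Qed.

Section RealFacts.
Variable R : realType.

Lemma connected_set_itv (i : interval R) : connected [set` i].
Proof. by apply/connected_intervalP; exact: interval_is_interval. Qed.

Lemma sup_gt_seq (S : set R) (s : seq R) : S !=set0 ->
  (forall u, u \in s -> u < sup S) -> exists2 w, S w & forall u, u \in s -> u < w.
Proof.
move=> [w0 Sw0]; elim: s => [|x s IH] lt_sup; first by exists w0.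
have [w1 Sw1 ltw1] : exists2 w, S w & forall u, u \in s -> u < w.
  by apply: IH => u us; apply: lt_sup; rewrite in_cons us orbT.
have [y Sy xy] := sup_gt (ex_intro _ w0 Sw0) (lt_sup x (mem_head x s)).
have [w1y|yw1] := lerP w1 y.
- exists y => // u; rewrite in_cons => /orP[/eqP -> //|us].
  exact: lt_le_trans (ltw1 u us) w1y.
- exists w1 => // u; rewrite in_cons => /orP[/eqP ->|us]; last exact: ltw1.
  exact: lt_trans xy yw1.
Qed.

Lemma image_itv0I (U : Type) (f : R -> U) (x c d : R) :
  {in @I01 R &, injective f} -> 0 <= c -> x <= 1 -> d <= 1 ->
  f @` [set t | 0 <= t <= x] `&` f @` [set t | c <= t <= d] =
  f @` [set t | c <= t <= Order.min x d].
Proof.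
move=> finj c0 x1 d1; apply/seteqP.
split => [_ [[u /andP[u0 ux] <-] [t /andP[ct td] eft]]|].
- have ut : u = t.
    apply: finj; last by rewrite eft.
      by rewrite in_setE /I01 /=; apply/andP; split; lra.
    by rewrite in_setE /I01 /=; apply/andP; split; lra.
  by exists t => //; apply/andP; split => //; rewrite le_min td -ut ux.
- move=> z [t /andP[ct]]; rewrite le_min => /andP[tx td] <-.
  by split; exists t => //; apply/andP; split => //; lra.
Qed.

End RealFacts.

Section InitialSegment.
Variables (R : realType) (T : topologicalType) (gamma g : R -> T) (O : set T)
  (a b : R).

(* In the application [gamma] parametrises a translated branch X^l + p, [O] is
   Int(T_R) and [g] is F along a subarc of a branch. *)
Definition hit (v : R) := I01 v /\ exists2 t, a <= t <= b & g t = gamma v.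

Hypotheses
  (gamma_trace : forall W : set R, open W ->
     exists2 V : set T, open V & forall w, I01 w -> V (gamma w) <-> W w)
  (openO : open O) (gamma_NclO : forall w, Ioc01 w -> ~ closure O (gamma w))
  (g_cont : {within [set t | a <= t <= b], continuous g})
  (g_cases : forall t, a <= t <= b -> (exists2 w, I01 w & g t = gamma w) \/ O (g t))
  (ab : a <= b) (ga : g a = gamma 0).

Lemma gamma_notin_O w : Ioc01 w -> ~ O (gamma w).
Proof. by move=> /gamma_NclO + /subset_closure. Qed.

Lemma hit0 : hit 0.
Proof.
split; first by apply/andP; split; [exact: lexx|exact: ler01].
by exists a => //; rewrite lexx ab.
Qed.

(* If v were not reached, O with the parameters below v, and the parameters above v,
   would disconnect g([a, t1]). *)
Lemma hit_down u v : hit u -> 0 < v -> v < u -> hit v.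
Proof.
move=> [/andP[u0 u1] [t1 /andP[at1 t1b] gt1]] v0 vu.
split; first by apply/andP; split; lra.
apply: contrapT => nhit.
have [V1 oV1 V1E] := gamma_trace (@open_lt _ v).
have [V2 oV2 V2E] := gamma_trace (@open_gt _ v).
pose O1 := O `|` V1; pose O2 := ~` closure O `&` V2.
pose C := g @` [set t | a <= t <= t1].
have sub_ab : [set t | a <= t <= t1] `<=` [set t | a <= t <= b].
  by move=> t /andP[a_t tt1]; apply/andP; split => //; exact: le_trans tt1 t1b.
have C_conn : connected C.
  apply: connected_continuous_connected; last exact: continuous_subspaceW g_cont.
  by have := connected_set_itv (i := `[a, t1]); rewrite set_itvcc.
have C_O12 : C `&` O1 `&` O2 = set0.
  apply/seteqP; split => // _ [[[t /sub_ab tI <-] O1g] [nclO V2g]].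
  case: O1g => [/subset_closure //|V1g].
  case: (g_cases tI) => [[w Iw gw]|/subset_closure //].
  rewrite gw in V1g V2g.
  by have := (V1E w Iw).1 V1g; have := (V2E w Iw).1 V2g => /= ? ?; lra.
have C_cover : C `<=` O1 `|` O2.
  move=> _ [t /sub_ab tI <-].
  case: (g_cases tI) => [[w Iw gw]|Og]; last by left; left.
  rewrite gw; have [wv|vw|wv] := ltgtP w v.
  - by left; right; exact/(V1E w Iw).2.
  - right; split; last exact/(V2E w Iw).2.
    by apply: gamma_NclO; case/andP: Iw => _ w1; apply/andP; split => //; lra.
  - by case: nhit; exists t; rewrite // gw wv.
have t1C : C (g t1) by exists t1 => //=; rewrite lexx at1.
have aC : C (g a) by exists a => //=; rewrite lexx at1.
have oO1 : open O1 by exact: openU.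
have oO2 : open O2 by apply: openI oV2; exact/closed_openC/closed_closure.
have [CO1|CO2] := connected_open_cover C_conn oO1 oO2 C_cover C_O12.
- case: (CO1 _ t1C); rewrite gt1.
  + by apply: gamma_notin_O; apply/andP; split => //; lra.
  + by move/(V1E u (introT andP (conj u0 u1))) => /=; lra.
- case: (CO2 _ aC) => _; rewrite ga.
  by move/(V2E 0 (proj1 hit0)) => /=; lra.
Qed.

(* If sup hit were not reached, finitely many of the open sets
   "g lands in O or below the parameter u < sup hit" would cover [a, b]. *)
Lemma hit_max : exists2 sg, hit sg & forall v, hit v -> v <= sg.
Proof.
have hs : has_sup hit by split; [exists 0; exact: hit0|exists 1 => v [/andP[]]].
exists (sup hit); last exact: sup_upper_bound.
apply: contrapT => nhit.
have hit_lt v : hit v -> v < sup hit.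
  move=> hv; rewrite lt_neqAle (sup_upper_bound hs hv) andbT.
  by apply/eqP => ev; apply: nhit; rewrite -ev.
have sup_gt0 := hit_lt 0 hit0.
have trace_lt u : exists V : set T,
    open V /\ forall w, I01 w -> V (gamma w) <-> w < u.
  by have [V oV VE] := gamma_trace (@open_lt _ u); exists V.
have [V HV] := choice trace_lt.
pose D := [set u : R | 0 < u < sup hit].
pose W u := [set t | a <= t <= b -> (O `|` V u) (g t)]°.
have ab_compact : compact [set t : R | a <= t <= b].
  by rewrite -set_itvcc; exact: segment_compact.
move: ab_compact; rewrite compact_cover => /(_ R D W) [].
- by move=> u _; exact: open_interior.
- move=> t tI.
  suff [u Du gu] : exists2 u, D u & (O `|` V u) (g t).
    exists u => //; apply: continuous_within_nbhs g_cont tI _.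
    exact: open_nbhs_nbhs (conj (openU openO (HV u).1) gu).
  case: (g_cases tI) => [[w Iw gw]|Og]; last first.
    by exists (sup hit / 2); [rewrite /D /=; apply/andP; split; lra|left].
  have wlt := hit_lt w (conj Iw (ex_intro2 _ _ t tI gw)).
  have w0 : 0 <= w by case/andP: Iw.
  exists ((w + sup hit) / 2); first by rewrite /D /=; apply/andP; split; lra.
  by right; rewrite gw; apply/(HV _).2 => //; lra.
move=> D' D'D coverD'.
have lt_sup u : u \in 0 :: enum_fset D' -> u < sup hit.
  by rewrite in_cons => /orP[/eqP -> //|/D'D]; rewrite in_setE => /andP[].
have [w [Iw [t tI gt]] ltw] := sup_gt_seq (ex_intro _ 0 hit0) lt_sup.
have w0 : 0 < w by apply: ltw; exact: mem_head.
have [u uD' /nbhs_singleton /(_ tI)] := coverD' t tI.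
rewrite gt => -[|/((HV u).2 w Iw) wu].
- by apply: gamma_notin_O; case/andP: Iw => _ w1; apply/andP; split.
- by have := ltw u; rewrite in_cons uD' orbT => /(_ isT); lra.
Qed.

Lemma hit_initial_segment : exists2 sg, hit sg & hit = [set v | 0 <= v <= sg].
Proof.
have [sg hit_sg sg_max] := hit_max; exists sg => //.
apply/seteqP; split => [v hv|v /andP[v0 vsg]].
  by apply/andP; split; [case/andP: hv.1|exact: sg_max].
move: v0; rewrite le_eqVlt => /orP[/eqP <-|v_pos]; first exact: hit0.
move: vsg; rewrite le_eqVlt => /orP[/eqP ->|v_lt]; first exact: hit_sg.
exact: hit_down hit_sg v_pos v_lt.
Qed.

End InitialSegment.

Section Attachment.
Variables (R : realType) (T : topologicalType) (h : R -> T).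

(* [attached_at x u] says r_R(x) = u, so [rRpre01 h x] reads
   [exists u, 0 <= u < 1 /\ attached_at x u]. *)
Definition attached_at (x : T) (u : R) :=
  x = h u \/ (~ range h x /\ closure (compo h x) (h u)).

Lemma attached_at_homeo (f g : T -> T) (c : R) x u :
  continuous f -> cancel f g -> (forall v, f (h v) = h (v + c)) ->
  attached_at x u -> attached_at (f x) (u + c).
Proof.
move=> cf fK fh [->|[nx clx]]; first by left; rewrite fh.
have g_h v : g (h v) = h (v - c) by rewrite -{1}(subrK c v) -fh fK.
have f_Nrange : f @` (~` range h) `<=` ~` range h.
  move=> _ [y ny <-] [v _ ev]; apply: ny; exists (v - c) => //.
  by rewrite -[y]fK -ev g_h.
right; split; first by apply: f_Nrange; exists x.
rewrite -fh; apply: closureS (closure_image_continuous cf clx).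
exact: connected_component_image.
Qed.

Hypotheses (hinj : injective h)
  (h_attach : forall x, ~ range h x ->
     exists y, closure (compo h x) `&` range h = [set y]).

Lemma attach_point_unique y u v : ~ range h y ->
  closure (compo h y) (h u) -> closure (compo h y) (h v) -> u = v.
Proof.
move=> ny clu clv; have [z hz] := h_attach ny; apply: hinj.
have : (closure (compo h y) `&` range h) (h u) by split => //; exists u.
have : (closure (compo h y) `&` range h) (h v) by split => //; exists v.
by rewrite hz => -> ->.
Qed.

Lemma attached_at_unique x u v : attached_at x u -> attached_at x v -> u = v.
Proof.
move=> [->|[nx clu]] [ev|[nx' clv]].
- exact: hinj.
- by case: nx'; exists u.
- by case: nx; exists v.
- exact: attach_point_unique clu clv.
Qed.

Lemma attached_at_closure y x u : ~ range h y -> attached_at y u ->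
  closure (compo h y) x -> (~ range h x -> compo h y x) -> attached_at x u.
Proof.
move=> ny [ey|[_ clu]] clx yx; first by case: ny; exists u.
case: (pselect (range h x)) => [[v _ ev]|nx].
  have clv : closure (compo h y) (h v) by rewrite ev.
  by left; rewrite -ev (attach_point_unique ny clv clu).
right; split => //.
by rewrite /compo -(same_connected_component (yx nx)).
Qed.

End Attachment.

Section SunLikeMaps.
Variables (R : realType) (T : topologicalType) (h : R -> T) (tau tauinv F : T -> T)
  (L : finType) (phi : L -> R -> T).
Hypotheses (hinj : injective h)
  (h_attach : forall x, ~ range h x ->
     exists y, closure (compo h x) `&` range h = [set y])
  (tauK : cancel tau tauinv) (tauinvK : cancel tauinv tau)
  (ctau : continuous tau) (ctauinv : continuous tauinv)
  (tauh : forall x, tau (h x) = h (x + 1))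
  (cF : continuous F) (Ftau : forall x, F (tau x) = tau (F x)).
Hypotheses (phi_arc : forall i, arc01 (phi i))
  (phi_NTR : forall i t, Ioc01 t -> ~ TR F h (phi i t))
  (phi_closure : forall i, closure (phi i @` @Ioc01 R) = phi i @` @I01 R)
  (phi_disj : forall i j, i != j -> phi i @` @I01 R `&` phi j @` @I01 R = set0)
  (sun_branches : (~` TR F h) `&` rRpre01 h = [set x | exists i, (phi i @` @Ioc01 R) x]).

Local Notation sh := (@Defs.shift T tau tauinv).

Lemma attached_at_shift x u m :
  attached_at h x u -> attached_at h (sh m x) (u + m%:~R).
Proof.
elim/int_ind_addr1: m x u => [|m IH|m IH] x u xu; first by rewrite addr0.
- rewrite shiftS // rmorphD /= addrA.
  exact: attached_at_homeo ctau tauK tauh (IH _ _ xu).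
- rewrite shiftN1 // rmorphB /= addrA.
  exact: attached_at_homeo ctauinv tauinvK (tauinv_h tauK tauh) (IH _ _ xu).
Qed.

Lemma rRpre01_shift x m : rRpre01 h x -> rRpre01 h (sh m x) -> m = 0.
Proof.
move=> [u [/andP[u0 u1] xu]] [v [/andP[v0 v1] xv]].
have uv := attached_at_unique hinj h_attach (attached_at_shift m xu) xv.
by apply: (@intr_eq0_bounded R); lra.
Qed.

Lemma TR_shift m x : TR F h x -> TR F h (sh m x).
Proof.
apply: closure_stable; first exact: continuous_shift.
move=> _ [_ [n [t ->]] <-]; exists n, (t + m%:~R).
by rewrite -(shift_h tauK tauinvK tauh) iter_shift.
Qed.

Lemma TR_shiftE m x : TR F h (sh m x) <-> TR F h x.
Proof. by split; [move/(TR_shift (m := - m)); rewrite shiftK|exact: TR_shift]. Qed.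

Lemma closure_NTR_shift m x :
  closure (~` TR F h) x -> closure (~` TR F h) (sh m x).
Proof.
apply: closure_stable; first exact: continuous_shift.
by move=> _ [y ny <-] /TR_shiftE.
Qed.

Lemma phi_cont i : {within @I01 R, continuous phi i}.
Proof. by case: (phi_arc i). Qed.

Lemma phi_inj i u v : I01 u -> I01 v -> phi i u = phi i v -> u = v.
Proof. by case: (phi_arc i) => _ inj _ Iu Iv; apply: inj; exact: mem_set. Qed.

Lemma phi_branch_eq i j u v : I01 u -> I01 v -> phi i u = phi j v -> i = j.
Proof.
move=> Iu Iv e; apply/eqP; apply: contrapT => /negP ij.
have := phi_disj ij; rewrite -subset0 => /(_ (phi i u)); apply.
by split; [exists u|exists v].
Qed.

Lemma rpar_phi j v : I01 v -> rpar phi j (phi j v) = v.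
Proof.
move=> Iv; apply: xget_unique; first by split.
by move=> u [Iu /phi_inj]; apply.
Qed.

Lemma phi_Nrange i t : Ioc01 t -> ~ range h (phi i t).
Proof.
move=> It [u _ eu]; apply: (phi_NTR (i := i) It); rewrite -eu.
by apply: subset_closure; exists 0%N, u.
Qed.

(* For t = 0, phi_i(0) lies in the closure of the component of phi_i(1), which is
   attached where phi_i(1) is. *)
Lemma phi_rRpre01 i t : I01 t -> rRpre01 h (phi i t).
Proof.
have Ioc_rR u : Ioc01 u -> rRpre01 h (phi i u).
  move=> Iu; suff : ((~` TR F h) `&` rRpre01 h) (phi i u) by case.
  by rewrite sun_branches; exists i, u.
move=> /andP[]; rewrite le_eqVlt => /orP[/eqP <- _|tpos t1]; last first.
  by apply: Ioc_rR; apply/andP.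
have I1 : @Ioc01 R 1 by apply/andP; split; [exact: ltr01|exact: lexx].
have [u [u01 att1]] := Ioc_rR 1 I1.
have Ioc_compo : phi i @` @Ioc01 R `<=` compo h (phi i 1).
  apply: connected_component_max; first by exists 1.
  - by move=> _ [v Iv <-]; exact: phi_Nrange.
  - apply: connected_continuous_connected.
      by have := @connected_set_itv R `]0, 1]; rewrite set_itvoc.
    apply: continuous_subspaceW; last exact: phi_cont.
    move=> v /andP[v0 v1].
    by apply/andP; split => //; exact: ltW.
have I0 : @I01 R 0 by apply/andP; split; [exact: lexx|exact: ler01].
exists u; split => //; apply: (attached_at_closure hinj h_attach (phi_Nrange I1) att1).
- by apply: (closureS Ioc_compo); rewrite phi_closure; exists 0.
- move=> nr0; apply: (@connected_component_max _ _ (phi i @` @I01 R)).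
  + by exists 1 => //; apply/andP; split; [exact: ler01|exact: lexx].
  + move=> _ [v /andP[v0 v1] <-]; move: v0; rewrite le_eqVlt => /orP[/eqP <- //|vpos].
    by apply: phi_Nrange; apply/andP.
  + apply: connected_continuous_connected; last exact: phi_cont.
    by have := @connected_set_itv R `[0, 1]; rewrite set_itvcc.
  + by exists 0.
Qed.

Lemma phi_Xset i t : I01 t -> Xset F h (phi i t).
Proof.
move=> It; split; last exact: phi_rRpre01.
have : closure (phi i @` @Ioc01 R) (phi i t) by rewrite phi_closure; exists t.
by apply: closureS => _ [u Iu <-]; exact: phi_NTR.
Qed.

Lemma shift_phi_trace p l (W : set R) : open W ->
  exists2 V : set T, open V & forall w, I01 w -> V (sh p (phi l w)) <-> W w.
Proof.
move=> oW; have [V oV VE] := arc01_trace (phi_arc l) oW.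
exists (sh (- p) @^-1` V); first by apply: open_comp oV => x _; exact: continuous_shift.
by move=> w Iw; rewrite /preimage /= shiftK //; exact: VE.
Qed.

Lemma shift_phi_Nclosure_interior p l w :
  Ioc01 w -> ~ closure (TR F h)° (sh p (phi l w)).
Proof.
move=> Iw /(closureS (@interior_subset _ (TR F h))) /closed_closure /TR_shiftE.
exact: phi_NTR.
Qed.

Section BasicPartition.
Variables (K : finType) (pb : K -> L) (pa pc : K -> R) (pl : K -> L) (pp : K -> int).
Hypotheses (P_bounds : forall k, 0 <= pa k /\ pa k <= pc k /\ pc k <= 1)
  (P_disj : forall k k', k != k' ->
     Pset phi pb pa pc k `&` Pset phi pb pa pc k' = set0)
  (P_image : forall k, F @` Pset phi pb pa pc k `<=`
     (sh (pp k) @` (phi (pl k) @` @I01 R)) `|` (TR F h)°)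
  (P_min : forall k, F (phi (pb k) (pa k)) = sh (pp k) (phi (pl k) 0)).

Local Notation P := (Pset phi pb pa pc).
Local Notation ang s := (angle tau tauinv F h phi pb pa pc s).
Local Notation branch_hit A b :=
  (hit (sh (pp A) \o phi (pl A)) (fun t => F (phi (pb A) t)) (pa A) b).

Lemma Pset_I01 k t : pa k <= t <= pc k -> I01 t.
Proof.
move=> /andP[kt tk]; have [k0 [_ k1]] := P_bounds k.
by apply/andP; split; [exact: le_trans k0 kt|exact: le_trans tk k1].
Qed.

Lemma Pset_Xset k y : P k y -> Xset F h y.
Proof. by move=> [t /Pset_I01 It <-]; exact: phi_Xset. Qed.

Lemma angle_sub s k : ang s k `<=` P (s k).
Proof.
move=> _ [[x Hx <-] Xw]; have [m [y [Py ey]]] := Hx k (leqnn k).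
rewrite ey in Xw *; suff -> : m = 0 by [].
exact: rRpre01_shift (Pset_Xset Py).2 Xw.2.
Qed.

Lemma angle_succ_pred s k w : ang s k.+1 w ->
  exists y m, ang s k y /\ w = sh m (F y).
Proof.
move=> [[x Hx ex] Xw]; have [m [y [Py ey]]] := Hx k (leqnSn k).
exists y, m; split; last by rewrite -ex /= ey shift_comm.
split; last exact: Pset_Xset Py.
exists (sh (- m) x); last by rewrite iter_shift // ey shiftK.
move=> i ik; have [m1 [y1 [Py1 e1]]] := Hx i (leqW ik).
by exists (- m + m1), y1; split => //; rewrite iter_shift // e1 shiftD.
Qed.

Lemma angle_succ_of s k y p z : ang s k y -> F y = sh p z -> P (s k.+1) z ->
  ang s k.+1 z.
Proof.
move=> [[x Hx ex] _] eF Pz; split; last exact: Pset_Xset Pz.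
exists (sh (- p) x); last by rewrite iter_shift //= ex eF shiftK.
move=> i; rewrite leq_eqVlt => /orP[/eqP ->|ik].
  by exists 0, z; split => //; rewrite iter_shift //= ex eF shiftK.
have [m1 [y1 [Py1 e1]]] := Hx i ik.
by exists (- p + m1), y1; split => //; rewrite iter_shift // e1 shiftD.
Qed.

Lemma angle0 s : ang s 0 = P (s 0).
Proof.
apply/seteqP; split => [w|y Py]; first exact: angle_sub.
split; last exact: Pset_Xset Py.
by exists y => // i; rewrite leqn0 => /eqP ->; exists 0, y.
Qed.

Lemma P_image_cases A t : pa A <= t <= pc A ->
  (exists2 w, I01 w & F (phi (pb A) t) = sh (pp A) (phi (pl A) w)) \/
  (TR F h)° (F (phi (pb A) t)).
Proof.
move=> tA; case: (P_image (k := A) (t := F (phi (pb A) t))).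
- by exists (phi (pb A) t) => //; exists t.
- by move=> [_ [w Iw <-] <-]; left; exists w.
- by right.
Qed.

Lemma branch_hit_segment A b : pa A <= b <= pc A ->
  exists2 sg, branch_hit A b sg & branch_hit A b = [set v | 0 <= v <= sg].
Proof.
move=> /andP[ab bpc]; have ab_pc t : pa A <= t <= b -> pa A <= t <= pc A.
  by move=> /andP[a_t tb]; rewrite a_t (le_trans tb bpc).
apply: (hit_initial_segment (O := (TR F h)°)).
- exact: shift_phi_trace.
- exact: open_interior.
- by move=> w; exact: shift_phi_Nclosure_interior.
- move=> t; apply: continuous_comp; last exact: cF.
  apply: continuous_subspaceW; last exact: phi_cont.
  by move=> u /ab_pc /Pset_I01.
- by move=> t /ab_pc; exact: P_image_cases.
- exact: ab.
- exact: P_min.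
Qed.

Lemma angle_succE s k b : pa (s k) <= b <= pc (s k) ->
    ang s k = phi (pb (s k)) @` [set t | pa (s k) <= t <= b] ->
  ang s k.+1 = phi (pl (s k)) @` branch_hit (s k) b `&` P (s k.+1).
Proof.
move=> /andP[_ bpc] eang; apply/seteqP; split => [w angw|z [[v [_ [t tI gt]] <-] Pz]].
- split; last exact: angle_sub.
  have [y [m [angy ew]]] := angle_succ_pred angw.
  move: angy; rewrite eang => -[t /andP[a_t tb] ey].
  have tA : pa (s k) <= t <= pc (s k) by rewrite a_t (le_trans tb bpc).
  case: (P_image_cases tA) => [[v Iv gv]|TRint].
  + have ew' : w = sh (m + pp (s k)) (phi (pl (s k)) v).
      by rewrite ew -ey gv shiftD.
    have mp0 : m + pp (s k) = 0.
      apply: (rRpre01_shift (phi_rRpre01 (pl (s k)) Iv)).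
      by rewrite -ew'; case: angw => _ [].
    by exists v; [split => //; exists t; rewrite ?a_t|rewrite ew' mp0].
  + exfalso; case: angw => _ [clw _]; have := closure_NTR_shift (m := - m) clw.
    by rewrite ew shiftK // -ey => /closure_setC_Ninterior/(_ TRint).
- move: gt => /= gt; apply: (angle_succ_of _ gt Pz).
  by rewrite eang; exists t.
Qed.

Lemma angle_succ_arc s k b : pa (s k) <= b <= pc (s k) ->
    ang s k = phi (pb (s k)) @` [set t | pa (s k) <= t <= b] ->
    ang s k.+1 !=set0 ->
  exists d, [/\ pa (s k.+1) <= d <= pc (s k.+1),
    ang s k.+1 = phi (pb (s k.+1)) @` [set t | pa (s k.+1) <= t <= d] &
    pos_covers tau tauinv F phi 1 (pb (s k)) (pa (s k)) b (pb (s k.+1))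
      (pa (s k.+1)) d (pp (s k))].
Proof.
move=> bI eang; rewrite (angle_succE bI eang).
have [sg hit_sg ->] := branch_hit_segment bI.
have [pB0 [pBc pc1]] := P_bounds (s k.+1).
have Isg : I01 sg := hit_sg.1.
move=> [_ [[v /andP[v0 vsg] <-] [t /andP[pBt tpc] ephi]]].
have It : I01 t := Pset_I01 (introT andP (conj pBt tpc)).
have Iv : I01 v by apply/andP; split => //; case/andP: Isg => _; exact: le_trans vsg.
have Bl := phi_branch_eq It Iv ephi.
rewrite /Pset Bl in ephi *; have vt := phi_inj Iv It (esym ephi).
exists (Order.min sg (pc (s k.+1))); split.
- by rewrite le_min ge_min lexx orbT pBc andbT (le_trans pBt) // -vt.
- have [_ linj _] := phi_arc (pl (s k)).
  by apply: image_itv0I => //; case/andP: Isg.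
- have [_ [ts /andP[ats tsb] gts]] := hit_sg.
  have I0 : @I01 R 0 by apply/andP; split; [exact: lexx|exact: ler01].
  exists (pa (s k)), ts; split => //=.
  + by rewrite P_min shiftK // rpar_phi.
  + by rewrite gts shiftK // rpar_phi // ge_min lexx.
Qed.

Lemma angle_initial_arc s k : ang s k !=set0 ->
  exists2 b, pa (s k) <= b <= pc (s k) &
    ang s k = phi (pb (s k)) @` [set t | pa (s k) <= t <= b].
Proof.
elim: k => [_|k IH ne].
  by exists (pc (s 0)); [have [_ [-> _]] := P_bounds (s 0); rewrite lexx|exact: angle0].
have [w /angle_succ_pred [y [m [angy _]]]] := ne.
have [b bI eang] := IH (ex_intro _ y angy).
by have [d [dI eang' _]] := angle_succ_arc bI eang ne; exists d.
Qed.

Lemma angle_pos_covers s n A :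
  ang s n !=set0 -> ang s n.+1 !=set0 -> ang s n `<=` P A ->
  exists (i : L) (a b : R) (j : L) (c d : R),
    [/\ 0 <= a /\ a <= b /\ b <= 1, 0 <= c /\ c <= d /\ d <= 1,
        ang s n = phi i @` [set t | a <= t <= b],
        ang s n.+1 = phi j @` [set t | c <= t <= d] &
        pos_covers tau tauinv F phi 1 i a b j c d (pp A)].
Proof.
move=> ne ne' sA; have [b /andP[ab bpc] eang] := angle_initial_arc ne.
have -> : A = s n.
  apply/eqP; apply: contrapT => /negP nA; have [y angy] := ne.
  have := P_disj nA; rewrite -subset0 => /(_ y); apply.
  by split; [exact: sA|exact: angle_sub].
have [d [/andP[cd dpc] eang' pcov]] :=
  angle_succ_arc (introT andP (conj ab bpc)) eang ne'.
have [a0 [_ pc1]] := P_bounds (s n); have [c0 [_ pc1']] := P_bounds (s n.+1).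
exists (pb (s n)), (pa (s n)), b, (pb (s n.+1)), (pa (s n.+1)), d.
by split => //; do !split => //; [exact: le_trans bpc pc1|exact: le_trans dpc pc1'].
Qed.

End BasicPartition.

End SunLikeMaps.

Unset Implicit Arguments.

Theorem mainTheorem11 (R : realType) (T : topologicalType) (h : R -> T)
  (tau tauinv : T -> T) (F : T -> T) (L : finType) (phi : L -> R -> T)
  (K : finType) (pb : K -> L) (pa pc : K -> R) (pl : K -> L) (pp : K -> int) :
  lifted_graph h tau tauinv ->
  continuous F ->
  (forall x, F (tau x) = tau (F x)) ->
  sun_like F h phi ->
  basic_partition tau tauinv F h phi pb pa pc pl pp ->
  forall (s : nat -> K) (n : nat),
    angle tau tauinv F h phi pb pa pc s n !=set0 ->
    angle tau tauinv F h phi pb pa pc s n.+1 !=set0 ->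
  forall A : K,
    angle tau tauinv F h phi pb pa pc s n `<=` Pset phi pb pa pc A ->
  exists (i : L) (a b : R) (j : L) (c d : R),
    [/\ 0 <= a /\ a <= b /\ b <= 1, 0 <= c /\ c <= d /\ d <= 1,
        angle tau tauinv F h phi pb pa pc s n = phi i @` [set t | a <= t <= b],
        angle tau tauinv F h phi pb pa pc s n.+1 = phi j @` [set t | c <= t <= d] &
        pos_covers tau tauinv F phi 1 i a b j c d (pp A)].
Proof.
move=> [[_ [_ hinj _]] [ctau ctauinv tauK tauinvK] tauh h_graphs _] cF Ftau
  [[phi_arc _] phi_NTR phi_closure phi_disj sun_branches]
  [P_bounds P_disj P_image P_min _] s n ne ne' A sA.
have h_attach x : ~ range h x ->
    exists y, closure (compo h x) `&` range h = [set y].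
  by case/h_graphs.
exact: (angle_pos_covers hinj h_attach tauK tauinvK ctau ctauinv tauh cF Ftau
  phi_arc phi_NTR phi_closure phi_disj sun_branches P_bounds P_disj P_image P_min
  ne ne' sA).
Qed.
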